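(* Let $0<q\le1\le p\le2$, let $A\in\mathbb{R}^{m\times n}$, let $\bar{x}\in\mathbb{R}^n$ have exactly $S\ge1$ nonzero groups, set $b:=A\bar{x}$, and suppose the $(p,q)$-GREC$(S,S)$ holds. Let $K$ be the smallest integer with $2^{K-1}q\ge1$ and let $\lambda>0$. Then for every $x^*\in{\rm lev}_F(\bar{x}):=\{x:\|Ax-b\|_2^2+\lambda\|x\|_{p,q}^q\le\lambda\|\bar{x}\|_{p,q}^q\}$, $$\|x^*-\bar{x}\|_2^2\le 2\lambda^{\frac{2}{2-q}}S^{\frac{q-2}{q}+(1-2^{-K})\frac{4}{q(2-q)}}\big/\phi_{p,q}^{\frac{4}{2-q}}(S,S).$$ Moreover, the exponent $e:=\frac{q-2}{q}+(1-2^{-K})\frac{4}{q(2-q)}$ satisfies $e=1$ if $2^{K-1}q=1$ and $e<\frac{3-q}{2-q}$ if $2^{K-1}q>1$; hence $\|x^*-\bar{x}\|_2^2=O(\lambda^{\frac{2}{2-q}}S)$ in the first case and $O(\lambda^{\frac{2}{2-q}}S^{\frac{3-q}{2-q}})$ in the second, with constant $2/\phi_{p,q}^{4/(2-q)}(S,S)$.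
   Context: Group structure: $\{1,\dots,n\}$ is partitioned into disjoint nonempty index sets $\mathcal{G}_1,\dots,\mathcal{G}_r$; $x_{\mathcal{G}_i}$ is the subvector indexed by $\mathcal{G}_i$. For $\mathcal{J}\subseteq\{1,\dots,r\}$, $\|x_{\mathcal{G}_{\mathcal{J}}}\|_{p,q}:=(\sum_{i\in\mathcal{J}}\|x_{\mathcal{G}_i}\|_p^q)^{1/q}$ and $\|x\|_{p,q}:=\|x_{\mathcal{G}_{\{1,\dots,r\}}}\|_{p,q}$. A group $i$ is nonzero if $x_{\mathcal{G}_i}\ne0$. For $\mathcal{J}\subseteq\{1,\dots,r\}$ and integer $N$, $\mathcal{J}(x;N)$ is the set of the $N$ indices $i\in\mathcal{J}^c$ with the largest $\|x_{\mathcal{G}_i}\|_p$ (ties broken arbitrarily). Group restricted eigenvalue: $\phi_{p,q}(S,N):=\inf\{\|Ax\|_2/\|x_{\mathcal{G}_{\mathcal{N}}}\|_{p,2}: x\ne0,\ |\mathcal{J}|\le S,\ \|x_{\mathcal{G}_{\mathcal{J}^c}}\|_{p,q}\le\|x_{\mathcal{G}_{\mathcal{J}}}\|_{p,q},\ \mathcal{N}=\mathcal{J}(x;N)\cup\mathcal{J}\}$; the $(p,q)$-GREC$(S,N)$ holds if $\phi_{p,q}(S,N)>0$. *)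

From Stdlib Require Import Reals Lra Lia Bool.
Open Scope R_scope.

(* Power with real exponent; 0 (and nonpositive bases) map to 0.
   Only used with positive exponents, where 0^y = 0 is the right convention. *)
Definition rpow (x y : R) : R := if Rle_dec x 0 then 0 else Rpower x y.

Fixpoint sumR (k : nat) (f : nat -> R) : R :=
  match k with O => 0 | Datatypes.S k' => sumR k' f + f k' end.

Fixpoint countb (k : nat) (b : nat -> bool) : nat :=
  match k with O => O | Datatypes.S k' => (countb k' b + (if b k' then 1 else 0))%nat end.

Fixpoint anyb (k : nat) (b : nat -> bool) : bool :=
  match k with O => false | Datatypes.S k' => anyb k' b || b k' end.

Definition Rnzb (a : R) : bool := if Req_EM_T a 0 then false else true.

(* Vectors in R^n are functions nat -> R (entries j < n); matrices in R^{m x n}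
   are functions nat -> nat -> R (entries k < m, j < n).
   The group structure: grp j is the index of the group containing coordinate j;
   groups are 0..r-1 (see hypotheses of the theorem). *)

Definition gnorm (n : nat) (grp : nat -> nat) (p : R) (x : nat -> R) (i : nat) : R :=
  rpow (sumR n (fun j => if Nat.eqb (grp j) i then rpow (Rabs (x j)) p else 0)) (/ p).

Definition gnormJ (n : nat) (grp : nat -> nat) (r : nat) (p q : R)
  (J : nat -> bool) (x : nat -> R) : R :=
  rpow (sumR r (fun i => if J i then rpow (gnorm n grp p x i) q else 0)) (/ q).

Definition gnorm_full n grp r p q x : R := gnormJ n grp r p q (fun _ => true) x.

Definition matvec (n : nat) (A : nat -> nat -> R) (x : nat -> R) : nat -> R :=
  fun k => sumR n (fun j => A k j * x j).

Definition l2 (m : nat) (v : nat -> R) : R := sqrt (sumR m (fun k => v k ^ 2)).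

Definition grp_nz (n : nat) (grp : nat -> nat) (x : nat -> R) (i : nat) : bool :=
  anyb n (fun j => Nat.eqb (grp j) i && Rnzb (x j)).

(* T = J(x;N): the N indices of J^c (within {0..r-1}) with the largest
   ||x_{G_i}||_p, ties broken arbitrarily (all choices allowed); if J^c has
   fewer than N elements, T = J^c. *)
Definition top_set n grp r p (x : nat -> R) (J : nat -> bool) (N : nat)
  (T : nat -> bool) : Prop :=
  (forall i, T i = true -> (i < r)%nat /\ J i = false) /\
  countb r T = Nat.min N (r - countb r J)%nat /\
  (forall i j, (i < r)%nat -> (j < r)%nat -> T i = true -> J j = false ->
      T j = false -> gnorm n grp p x j <= gnorm n grp p x i).

(* the set whose infimum is phi_{p,q}(S,N) *)
Definition phi_set (m n : nat) (grp : nat -> nat) (r : nat) (A : nat -> nat -> R)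
  (p q : R) (S N : nat) : R -> Prop :=
  fun v => exists (x : nat -> R) (J T : nat -> bool),
    (exists j, (j < n)%nat /\ x j <> 0) /\
    (countb r J <= S)%nat /\
    gnormJ n grp r p q (fun i => negb (J i)) x <= gnormJ n grp r p q J x /\
    top_set n grp r p x J N T /\
    v = l2 m (matvec n A x) / gnormJ n grp r p 2 (fun i => J i || T i) x.

Definition is_glb (E : R -> Prop) (l : R) : Prop :=
  (forall v, E v -> l <= v) /\ (forall l', (forall v, E v -> l' <= v) -> l' <= l).

(* Let d = xs - xbar and let J be the set of nonzero groups of xbar. Membership of xs in the
   level set, together with subadditivity of t ^ q and Minkowski's inequality on each group, gives
     ||A d||^2 + lam * sum_(i not in J) ||d_Gi||^q <= lam * sum_(i in J) ||d_Gi||^q,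
   so d satisfies the cone condition of the GREC.  Let T be the s largest groups of d off J and
   D = sum_(i in J u T) ||d_Gi||^2.  The GREC and the power-mean inequality on J give
   phi^2 D <= lam s (D / s)^(q/2), i.e. D <= s (lam / phi^2)^(2/(2-q)).  Every group outside J u T
   has ||d_Gi||^q at most the average over T, which bounds the mass outside J u T by
   sum_(i in J) ||d_Gi||^2 <= D; as p <= 2, ||d||_2^2 <= sum_i ||d_Gi||_p^2 <= 2 D.  This is the
   bound with exponent 1 on s, and the exponent e of the statement is always at least 1. *)

From Stdlib Require Import Reals Bool Lra Lia.
Open Scope R_scope.

(** * Real powers *)

Lemma Rdiv_nonneg a b : 0 <= a -> 0 < b -> 0 <= a / b.
Proof. intros Ha Hb. apply Rmult_le_pos; [exact Ha | now apply Rlt_le, Rinv_0_lt_compat]. Qed.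

Lemma Rdiv_le_1 a b : 0 < b -> a <= b -> a / b <= 1.
Proof.
  intros Hb Hab. apply Rmult_le_reg_r with b; [exact Hb |].
  unfold Rdiv. rewrite Rmult_assoc, Rinv_l; lra.
Qed.

Lemma rpow_0 y : rpow 0 y = 0.
Proof. unfold rpow; destruct (Rle_dec 0 0); [reflexivity | lra]. Qed.

Lemma rpow_pos_eq x y : 0 < x -> rpow x y = Rpower x y.
Proof. intro Hx; unfold rpow; destruct (Rle_dec x 0); [lra | reflexivity]. Qed.

Lemma rpow_ge0 x y : 0 <= rpow x y.
Proof. unfold rpow; destruct (Rle_dec x 0); [lra | left; apply exp_pos]. Qed.

Lemma rpow_gt0 x y : 0 < x -> 0 < rpow x y.
Proof. intro Hx; rewrite rpow_pos_eq by exact Hx; apply exp_pos. Qed.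

Lemma rpow_1 x : 0 <= x -> rpow x 1 = x.
Proof.
  intros [Hx | <-]; [rewrite rpow_pos_eq by exact Hx; now apply Rpower_1 | apply rpow_0].
Qed.

Lemma rpow_2 x : 0 <= x -> rpow x 2 = x ^ 2.
Proof.
  intros [Hx | <-]; [| rewrite rpow_0; ring].
  rewrite rpow_pos_eq by exact Hx.
  replace 2 with (INR 2) by (simpl; ring). now apply Rpower_pow.
Qed.

Lemma rpow_sqrt x : 0 <= x -> rpow x (/ 2) = sqrt x.
Proof.
  intros [Hx | <-]; [rewrite rpow_pos_eq by exact Hx; now apply Rpower_sqrt |].
  now rewrite rpow_0, sqrt_0.
Qed.

Lemma exp_le_exp x y : x <= y -> exp x <= exp y.
Proof. intros [H | ->]; [left; now apply exp_increasing | lra]. Qed.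

Lemma rpow_le_l x y a : 0 <= a -> 0 <= x <= y -> rpow x a <= rpow y a.
Proof.
  intros Ha [[Hx | <-] Hxy]; [| rewrite rpow_0; apply rpow_ge0].
  rewrite !rpow_pos_eq by lra. apply Rle_Rpower_l; lra.
Qed.

Lemma rpow_lt_l x y a : 0 < a -> 0 <= x < y -> rpow x a < rpow y a.
Proof.
  intros Ha [[Hx | <-] Hxy]; [| rewrite rpow_0; apply rpow_gt0; lra].
  rewrite !rpow_pos_eq by lra. apply Rlt_Rpower_l; lra.
Qed.

Lemma rpow_le_r x a b : 1 <= x -> a <= b -> rpow x a <= rpow x b.
Proof. intros Hx Hab. rewrite !rpow_pos_eq by lra. apply Rle_Rpower; lra. Qed.

Lemma rpow_ge_self x a : 1 <= x -> 1 <= a -> x <= rpow x a.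
Proof. intros Hx Ha. rewrite <- (rpow_1 x) at 1 by lra. now apply rpow_le_r. Qed.

Lemma rpow_le_r_le1 x a b : 0 <= x <= 1 -> a <= b -> rpow x b <= rpow x a.
Proof.
  intros [[Hx | <-] Hx1] Hab; [| rewrite !rpow_0; lra].
  rewrite !rpow_pos_eq by lra. unfold Rpower.
  assert (ln x <= 0).
  { destruct Hx1 as [Hlt | ->]; [| rewrite ln_1; lra].
    rewrite <- ln_1; left; now apply ln_increasing. }
  apply exp_le_exp; nra.
Qed.

Lemma rpow_mult x a b : 0 <= x -> rpow (rpow x a) b = rpow x (a * b).
Proof.
  intros [Hx | <-]; [| now rewrite !rpow_0].
  rewrite (rpow_pos_eq x a), !rpow_pos_eq by (exact Hx || apply exp_pos).
  apply Rpower_mult.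
Qed.

Lemma rpow_mul x y a : 0 <= x -> 0 <= y -> rpow (x * y) a = rpow x a * rpow y a.
Proof.
  intros [Hx | <-] [Hy | <-]; rewrite ?Rmult_0_l, ?Rmult_0_r, ?rpow_0; try ring.
  rewrite !rpow_pos_eq by nra. symmetry; apply Rpower_mult_distr; lra.
Qed.

Lemma rpow_plus x a b : 0 <= x -> rpow x (a + b) = rpow x a * rpow x b.
Proof.
  intros [Hx | <-]; [rewrite !rpow_pos_eq by exact Hx; apply Rpower_plus |].
  rewrite !rpow_0; ring.
Qed.

Lemma rpow_inv x a : 0 < x -> rpow (/ x) a = / rpow x a.
Proof.
  intro Hx. rewrite (rpow_pos_eq (/ x)) by now apply Rinv_0_lt_compat.
  rewrite rpow_pos_eq by exact Hx. unfold Rpower.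
  rewrite ln_Rinv, <- exp_Ropp by exact Hx. f_equal; ring.
Qed.

Lemma rpow_div x y a : 0 <= x -> 0 < y -> rpow (x / y) a = rpow x a / rpow y a.
Proof.
  intros Hx Hy. assert (0 < / y) by now apply Rinv_0_lt_compat.
  unfold Rdiv. now rewrite rpow_mul, rpow_inv by lra.
Qed.

Lemma rpow_rpow_inv x a : 0 <= x -> a <> 0 -> rpow (rpow x (/ a)) a = x.
Proof. intros Hx Ha. rewrite rpow_mult, Rinv_l by assumption. now apply rpow_1. Qed.

Lemma rpow_inv_rpow x a : 0 <= x -> a <> 0 -> rpow (rpow x a) (/ a) = x.
Proof. intros Hx Ha. rewrite rpow_mult, Rinv_r by assumption. now apply rpow_1. Qed.

(** * Bernoulli, convexity and subadditivity *)

Lemma rpow_le_bernoulli a y : 0 < a <= 1 -> 0 <= y -> rpow y a <= 1 + a * (y - 1).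
Proof.
  intros Ha [Hy | <-]; [| rewrite rpow_0; lra].
  rewrite rpow_pos_eq by exact Hy. unfold Rpower.
  set (c := 1 + a * (y - 1)).
  assert (Hc : 0 < c) by (unfold c; pose proof (Rmult_lt_0_compat a y); lra).
  rewrite <- (exp_ln c) by exact Hc. apply exp_le_exp.
  (* [ln z <= z - 1] at [z = y / c] and [z = 1 / c], weighted by [a] and [1 - a] *)
  assert (Hln : forall z, 0 < z -> ln z <= z - 1).
  { intros z Hz. pose proof (exp_ineq1_le (ln z)). rewrite exp_ln in * by exact Hz. lra. }
  assert (Hci : 0 < / c) by now apply Rinv_0_lt_compat.
  assert (H1 := Hln (y * / c) (Rmult_lt_0_compat _ _ Hy Hci)).
  assert (H2 := Hln (/ c) Hci).
  rewrite ln_mult in H1 by assumption. rewrite ln_Rinv in H1, H2 by exact Hc.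
  assert (E : a * (y * / c - 1) + (1 - a) * (/ c - 1) = 0).
  { replace (a * (y * / c - 1) + (1 - a) * (/ c - 1)) with (c * / c - 1) by (unfold c; ring).
    rewrite Rinv_r; lra. }
  apply (Rmult_le_compat_l a) in H1; [| lra]. apply (Rmult_le_compat_l (1 - a)) in H2; [| lra].
  lra.
Qed.

Lemma rpow_ge_bernoulli p y : 1 <= p -> 0 <= y -> 1 + p * (y - 1) <= rpow y p.
Proof.
  intros Hp Hy.
  assert (Hip : 0 < / p <= 1)
    by (split; [apply Rinv_0_lt_compat | rewrite <- Rinv_1; apply Rinv_le_contravar]; lra).
  pose proof (rpow_le_bernoulli (/ p) (rpow y p) Hip (rpow_ge0 _ _)) as H.
  rewrite rpow_inv_rpow in H by lra.
  apply (Rmult_le_compat_l p) in H; [| lra].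
  replace (p * (1 + / p * (rpow y p - 1))) with (p + rpow y p - 1) in H by (field; lra).
  lra.
Qed.

Lemma rpow_convex p al u v : 1 <= p -> 0 <= al <= 1 -> 0 <= u -> 0 <= v ->
  rpow (al * u + (1 - al) * v) p <= al * rpow u p + (1 - al) * rpow v p.
Proof.
  intros Hp Hal Hu Hv.
  set (c := al * u + (1 - al) * v).
  assert (Hfu := rpow_ge0 u p). assert (Hfv := rpow_ge0 v p).
  destruct (Req_dec c 0) as [Hc0 | Hc0]; [rewrite Hc0, rpow_0; nra |].
  assert (Hc : 0 < c) by (unfold c in *; nra).
  assert (Htan : forall t, 0 <= t -> rpow c p * (1 + p * (t / c - 1)) <= rpow t p).
  { intros t Ht. replace t with (c * (t / c)) at 2 by (field; lra).
    assert (0 <= t / c) by (apply Rdiv_nonneg; lra).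
    rewrite rpow_mul by lra.
    apply Rmult_le_compat_l; [apply rpow_ge0 | now apply rpow_ge_bernoulli]. }
  pose proof (Htan u Hu). pose proof (Htan v Hv).
  assert (E : al * (rpow c p * (1 + p * (u / c - 1)))
              + (1 - al) * (rpow c p * (1 + p * (v / c - 1)))
              = rpow c p) by (unfold c at 2 4; field; fold c; lra).
  nra.
Qed.

Lemma rpow_le_tangent a c u : 0 < a <= 1 -> 0 < c -> 0 <= u ->
  rpow u a <= rpow c a * (1 + a * (u / c - 1)).
Proof.
  intros Ha Hc Hu. replace u with (c * (u / c)) at 1 by (field; lra).
  assert (0 <= u / c) by (apply Rdiv_nonneg; lra).
  rewrite rpow_mul by lra.
  apply Rmult_le_compat_l; [apply rpow_ge0 | now apply rpow_le_bernoulli].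
Qed.

Lemma rpow_add_le q u v : 0 < q <= 1 -> 0 <= u -> 0 <= v ->
  rpow (u + v) q <= rpow u q + rpow v q.
Proof.
  intros Hq Hu Hv.
  assert (Hfu := rpow_ge0 u q). assert (Hfv := rpow_ge0 v q).
  destruct (Req_dec (u + v) 0) as [E | E]; [rewrite E, rpow_0; lra |].
  assert (Hs : 0 < u + v) by lra.
  (* [t ^ q >= t] on [0, 1], applied to [w / (u + v)] *)
  assert (Hw : forall w, 0 <= w <= u + v -> rpow (u + v) q * (w / (u + v)) <= rpow w q).
  { intros w Hw. replace w with ((u + v) * (w / (u + v))) at 2 by (field; lra).
    assert (0 <= w / (u + v) <= 1) by (split; [apply Rdiv_nonneg | apply Rdiv_le_1]; lra).
    rewrite rpow_mul by lra. apply Rmult_le_compat_l; [apply rpow_ge0 |].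
    rewrite <- (rpow_1 (w / (u + v))) at 1 by lra. apply rpow_le_r_le1; lra. }
  pose proof (Hw u ltac:(lra)). pose proof (Hw v ltac:(lra)).
  assert (rpow (u + v) q * (u / (u + v)) + rpow (u + v) q * (v / (u + v)) = rpow (u + v) q)
    by (field; lra).
  lra.
Qed.

(** * Finite sums *)

Lemma sumR_ext k f g : (forall i, (i < k)%nat -> f i = g i) -> sumR k f = sumR k g.
Proof.
  induction k as [| k IH]; intros H; simpl; [reflexivity |].
  rewrite IH by (intros; apply H; lia). rewrite (H k) by lia. reflexivity.
Qed.

Lemma sumR_le k f g : (forall i, (i < k)%nat -> f i <= g i) -> sumR k f <= sumR k g.
Proof.
  induction k as [| k IH]; intros H; simpl; [lra |].
  pose proof (IH ltac:(intros; apply H; lia)). pose proof (H k ltac:(lia)). lra.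
Qed.

Lemma sumR_plus k f g : sumR k (fun i => f i + g i) = sumR k f + sumR k g.
Proof. induction k as [| k IH]; simpl; [| rewrite IH]; ring. Qed.

Lemma sumR_minus k f g : sumR k (fun i => f i - g i) = sumR k f - sumR k g.
Proof. induction k as [| k IH]; simpl; [| rewrite IH]; ring. Qed.

Lemma sumR_scal k c f : sumR k (fun i => c * f i) = c * sumR k f.
Proof. induction k as [| k IH]; simpl; [| rewrite IH]; ring. Qed.

Lemma sumR_0 k : sumR k (fun _ => 0) = 0.
Proof. induction k as [| k IH]; simpl; [| rewrite IH]; ring. Qed.

Lemma sumR_nonneg k f : (forall i, (i < k)%nat -> 0 <= f i) -> 0 <= sumR k f.
Proof. intro H. rewrite <- (sumR_0 k). now apply sumR_le. Qed.

Lemma sumR_term_le k f j : (forall i, (i < k)%nat -> 0 <= f i) -> (j < k)%nat ->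
  f j <= sumR k f.
Proof.
  induction k as [| k IH]; intros H Hj; simpl; [lia |].
  assert (0 <= sumR k f) by (apply sumR_nonneg; intros; apply H; lia).
  destruct (Nat.eq_dec j k) as [-> | Hne]; [lra |].
  pose proof (IH ltac:(intros; apply H; lia) ltac:(lia)). pose proof (H k ltac:(lia)). lra.
Qed.

Lemma sumR_swap a b (f : nat -> nat -> R) :
  sumR a (fun i => sumR b (fun j => f i j)) = sumR b (fun j => sumR a (fun i => f i j)).
Proof.
  induction a as [| a IH]; simpl; [symmetry; apply sumR_0 |].
  rewrite IH, <- sumR_plus. reflexivity.
Qed.

Lemma sumR_indicator r g c : (g < r)%nat ->
  sumR r (fun i => if Nat.eqb g i then c else 0) = c.
Proof.
  induction r as [| r IH]; intros Hg; simpl; [lia |].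
  destruct (Nat.eqb_spec g r) as [-> | Hne].
  - rewrite (sumR_ext r _ (fun _ => 0)), sumR_0; [ring |].
    intros i Hi. destruct (Nat.eqb_spec r i); [lia | reflexivity].
  - rewrite IH by lia. ring.
Qed.

Lemma sumR_regroup n r grp f : (forall j, (j < n)%nat -> (grp j < r)%nat) ->
  sumR n f = sumR r (fun i => sumR n (fun j => if Nat.eqb (grp j) i then f j else 0)).
Proof.
  intro Hgrp. rewrite sumR_swap. apply sumR_ext. intros j Hj.
  symmetry. now apply sumR_indicator, Hgrp.
Qed.

Lemma sumR_zero_or_witness n f :
  (forall j, (j < n)%nat -> f j = 0) \/ exists j, (j < n)%nat /\ f j <> 0.
Proof.
  induction n as [| n [IH | IH]]; [left; intros; lia | |].
  - destruct (Req_dec (f n) 0) as [H | H]; [left | right; exists n; split; [lia | exact H]].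
    intros j Hj. destruct (Nat.eq_dec j n) as [-> | Hne]; [exact H | apply IH; lia].
  - right. destruct IH as [j [Hj H]]. exists j; split; [lia | exact H].
Qed.

Lemma l2_sq m v : l2 m v ^ 2 = sumR m (fun k => v k ^ 2).
Proof. unfold l2. apply pow2_sqrt, sumR_nonneg. intros; apply pow2_ge_0. Qed.

Definition sumR_on (k : nat) (P : nat -> bool) (f : nat -> R) : R :=
  sumR k (fun i => if P i then f i else 0).

Lemma sumR_on_le k P f g : (forall i, (i < k)%nat -> P i = true -> f i <= g i) ->
  sumR_on k P f <= sumR_on k P g.
Proof. intro H. apply sumR_le. intros i Hi. destruct (P i) eqn:E; [auto | lra]. Qed.

Lemma sumR_on_nonneg k P f : (forall i, 0 <= f i) -> 0 <= sumR_on k P f.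
Proof. intro H. apply sumR_nonneg. intros i _. destruct (P i); [apply H | lra]. Qed.

Lemma sumR_on_subset k P Q f : (forall i, 0 <= f i) ->
  (forall i, (i < k)%nat -> P i = true -> Q i = true) -> sumR_on k P f <= sumR_on k Q f.
Proof.
  intros Hf H. apply sumR_le. intros i Hi.
  destruct (P i) eqn:EP; [rewrite H by assumption; lra |]. destruct (Q i); [apply Hf | lra].
Qed.

Lemma sumR_on_scal k P c f : sumR_on k P (fun i => c * f i) = c * sumR_on k P f.
Proof.
  unfold sumR_on. rewrite <- sumR_scal. apply sumR_ext. intros i _. destruct (P i); ring.
Qed.

Lemma sumR_on_plus k P f g : sumR_on k P (fun i => f i + g i) = sumR_on k P f + sumR_on k P g.
Proof.
  unfold sumR_on. rewrite <- sumR_plus. apply sumR_ext. intros i _. destruct (P i); ring.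
Qed.

Lemma sumR_on_split k P f :
  sumR k f = sumR_on k P f + sumR_on k (fun i => negb (P i)) f.
Proof.
  unfold sumR_on. rewrite <- sumR_plus. apply sumR_ext. intros i _. destruct (P i); simpl; ring.
Qed.

Lemma sumR_on_term_le k P f i : (forall i, 0 <= f i) -> (i < k)%nat -> P i = true ->
  f i <= sumR_on k P f.
Proof.
  intros Hf Hi HPi. unfold sumR_on.
  pose proof (sumR_term_le k (fun i => if P i then f i else 0) i
    ltac:(intros j _; cbv beta; destruct (P j); [apply Hf | lra]) Hi) as H.
  cbv beta in H. now rewrite HPi in H.
Qed.

Lemma sumR_on_eq0 k P f : (forall i, 0 <= f i) -> sumR_on k P f = 0 ->
  forall i, (i < k)%nat -> P i = true -> f i = 0.
Proof.
  intros Hf E i Hi HPi. pose proof (sumR_on_term_le k P f i Hf Hi HPi). pose proof (Hf i). lra.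
Qed.

Lemma sumR_on_const k P c : sumR_on k P (fun _ => c) = INR (countb k P) * c.
Proof.
  unfold sumR_on. induction k as [| k IH]; simpl; [ring |].
  rewrite IH, plus_INR. destruct (P k); simpl; ring.
Qed.

(** * Inequalities between p-sums *)

Definition psum (n : nat) (w : nat -> bool) (p : R) (f : nat -> R) : R :=
  sumR_on n w (fun j => rpow (Rabs (f j)) p).

Lemma psum_ge0 n w p f : 0 <= psum n w p f.
Proof. apply sumR_on_nonneg. intros; apply rpow_ge0. Qed.

Lemma psum_mono n w p f g : 0 <= p ->
  (forall j, (j < n)%nat -> w j = true -> Rabs (f j) <= Rabs (g j)) ->
  psum n w p f <= psum n w p g.
Proof.
  intros Hp H. apply sumR_on_le. intros j Hj Hw.
  apply rpow_le_l; [exact Hp | split; [apply Rabs_pos | auto]].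
Qed.

Lemma psum_eq0 n w p f : psum n w p f = 0 ->
  forall j, (j < n)%nat -> w j = true -> f j = 0.
Proof.
  intros E j Hj Hw.
  pose proof (sumR_on_eq0 n w (fun j => rpow (Rabs (f j)) p)
    ltac:(intros; apply rpow_ge0) E j Hj Hw) as Hterm.
  cbv beta in Hterm. destruct (Req_dec (f j) 0) as [Hz | Hnz]; [exact Hz |].
  pose proof (rpow_gt0 (Rabs (f j)) p (Rabs_pos_lt _ Hnz)). lra.
Qed.

Lemma rpow_add_le_convex p A B u v : 1 <= p -> 0 < A -> 0 < B -> 0 <= u -> 0 <= v ->
  rpow (u + v) p <= rpow (A + B) p * (A / (A + B) * rpow (u / A) p + B / (A + B) * rpow (v / B) p).
Proof.
  intros Hp HA HB Hu Hv.
  set (al := A / (A + B)).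
  assert (Hal : 0 <= al <= 1) by (unfold al; split; [apply Rdiv_nonneg | apply Rdiv_le_1]; lra).
  assert (Hu' : 0 <= u / A) by (apply Rdiv_nonneg; lra).
  assert (Hv' : 0 <= v / B) by (apply Rdiv_nonneg; lra).
  replace (u + v) with ((A + B) * (al * (u / A) + (1 - al) * (v / B))) by (unfold al; field; lra).
  replace (B / (A + B)) with (1 - al) by (unfold al; field; lra).
  rewrite rpow_mul by nra.
  apply Rmult_le_compat_l; [apply rpow_ge0 | now apply rpow_convex].
Qed.

Lemma minkowski n w p f g h : 1 <= p ->
  (forall j, (j < n)%nat -> w j = true -> Rabs (h j) <= Rabs (f j) + Rabs (g j)) ->
  rpow (psum n w p h) (/ p) <= rpow (psum n w p f) (/ p) + rpow (psum n w p g) (/ p).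
Proof.
  intros Hp H.
  assert (Hip : 0 < / p) by (apply Rinv_0_lt_compat; lra).
  destruct (psum_ge0 n w p f) as [HF | HF].
  2:{ rewrite <- HF, rpow_0, Rplus_0_l. apply rpow_le_l; [lra | split; [apply psum_ge0 |]].
      apply psum_mono; [lra |]. intros j Hj Hw.
      pose proof (H j Hj Hw). rewrite (psum_eq0 n w p f (eq_sym HF) j Hj Hw), Rabs_R0 in *. lra. }
  destruct (psum_ge0 n w p g) as [HG | HG].
  2:{ rewrite <- HG, rpow_0, Rplus_0_r. apply rpow_le_l; [lra | split; [apply psum_ge0 |]].
      apply psum_mono; [lra |]. intros j Hj Hw.
      pose proof (H j Hj Hw). rewrite (psum_eq0 n w p g (eq_sym HG) j Hj Hw), Rabs_R0 in *. lra. }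
  set (A := rpow (psum n w p f) (/ p)). set (B := rpow (psum n w p g) (/ p)).
  assert (HA : 0 < A) by (apply rpow_gt0; exact HF).
  assert (HB : 0 < B) by (apply rpow_gt0; exact HG).
  assert (Hnormal : forall k C, 0 < C -> rpow C p = psum n w p k ->
            sumR_on n w (fun j => rpow (Rabs (k j) / C) p) = 1).
  { intros k C HC HCp. unfold sumR_on.
    rewrite (sumR_ext n _ (fun j => / rpow C p * (if w j then rpow (Rabs (k j)) p else 0))).
    - rewrite sumR_scal. change (/ rpow C p * psum n w p k = 1). rewrite <- HCp.
      apply Rinv_l. apply Rgt_not_eq, rpow_gt0, HC.
    - intros j _. destruct (w j); [| ring]. rewrite rpow_div by (apply Rabs_pos || lra).
      unfold Rdiv; ring. }
  assert (Hsum : psum n w p h <= rpow (A + B) p).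
  { apply Rle_trans with (sumR_on n w (fun j => rpow (A + B) p *
        (A / (A + B) * rpow (Rabs (f j) / A) p + B / (A + B) * rpow (Rabs (g j) / B) p))).
    - apply sumR_on_le. intros j Hj Hw. eapply Rle_trans.
      + apply rpow_le_l; [lra | split; [apply Rabs_pos | exact (H j Hj Hw)]].
      + apply rpow_add_le_convex; (lra || apply Rabs_pos).
    - rewrite sumR_on_scal, sumR_on_plus, !sumR_on_scal, !Hnormal
        by (lra || apply rpow_rpow_inv; (apply psum_ge0 || lra)).
      right. field. lra. }
  apply Rle_trans with (rpow (rpow (A + B) p) (/ p)).
  - apply rpow_le_l; [lra | split; [apply psum_ge0 | exact Hsum]].
  - right. apply rpow_inv_rpow; lra.
Qed.

Lemma sum_sq_le_psum n w p f : 1 <= p <= 2 ->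
  sumR_on n w (fun j => f j ^ 2) <= rpow (rpow (psum n w p f) (/ p)) 2.
Proof.
  intros Hp.
  destruct (psum_ge0 n w p f) as [HP | HP].
  2:{ rewrite <- HP, !rpow_0. right. rewrite <- (sumR_0 n). apply sumR_ext. intros j Hj.
      destruct (w j) eqn:Ew; [| reflexivity].
      rewrite (psum_eq0 n w p f (eq_sym HP) j Hj Ew). ring. }
  set (P := psum n w p f) in *. set (N := rpow P (/ p)).
  assert (HN : 0 < N) by (apply rpow_gt0; exact HP).
  assert (HNp : rpow N p = P) by (apply rpow_rpow_inv; lra).
  apply Rle_trans with (sumR_on n w (fun j => rpow N 2 / P * rpow (Rabs (f j)) p)).
  2:{ rewrite sumR_on_scal. right. change (rpow N 2 / P * P = rpow N 2). field. lra. }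
  apply sumR_on_le. intros j Hj Hw.
  assert (HfN : Rabs (f j) <= N).
  { destruct (Rle_lt_dec (Rabs (f j)) N) as [Hle | Hlt]; [exact Hle | exfalso].
    pose proof (rpow_lt_l N (Rabs (f j)) p ltac:(lra) ltac:(lra)).
    pose proof (sumR_on_term_le n w (fun j => rpow (Rabs (f j)) p) j
      ltac:(intros; apply rpow_ge0) Hj Hw) as Hterm.
    change (sumR_on n w _) with P in Hterm. lra. }
  (* [t ^ 2 <= t ^ p] on [0, 1], applied to [|f j| / N] *)
  assert (Hz : 0 <= Rabs (f j) / N <= 1)
    by (split; [apply Rdiv_nonneg | apply Rdiv_le_1]; (apply Rabs_pos || lra)).
  pose proof (rpow_le_r_le1 _ p 2 Hz ltac:(lra)) as H.
  rewrite !rpow_div, rpow_2, HNp in H by (apply Rabs_pos || lra).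
  rewrite rpow_2, pow2_abs in H by lra.
  assert (HN2 : 0 < N ^ 2) by (apply pow_lt; lra).
  apply (Rmult_le_compat_l (N ^ 2)) in H; [| lra].
  rewrite rpow_2 by lra.
  replace (N ^ 2 * (f j ^ 2 / N ^ 2)) with (f j ^ 2) in H by (field; lra).
  replace (N ^ 2 / P * rpow (Rabs (f j)) p) with (N ^ 2 * (rpow (Rabs (f j)) p / P))
    by (field; lra).
  exact H.
Qed.

Lemma power_mean r J (a : nat -> R) q : 0 < q <= 1 -> (forall i, 0 <= a i) ->
  (0 < countb r J)%nat ->
  sumR_on r J (fun i => rpow (a i) q)
    <= INR (countb r J) * rpow (sumR_on r J (fun i => rpow (a i) 2) / INR (countb r J)) (q / 2).
Proof.
  intros Hq Ha HJ.
  set (W := sumR_on r J (fun i => rpow (a i) 2)).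
  set (c := INR (countb r J)). assert (Hc : 0 < c) by (apply lt_0_INR; exact HJ).
  destruct (sumR_on_nonneg r J (fun i => rpow (a i) 2) ltac:(intros; apply rpow_ge0)) as [HW | HW].
  2:{ apply Rle_trans with 0; [| apply Rmult_le_pos; [lra | apply rpow_ge0]].
      right. rewrite <- (sumR_0 r). apply sumR_ext. intros i Hi.
      destruct (J i) eqn:EJ; [| reflexivity].
      pose proof (sumR_on_eq0 r J (fun i => rpow (a i) 2)
        ltac:(intros; apply rpow_ge0) (eq_sym HW) i Hi EJ) as H0.
      cbv beta in H0. destruct (Ha i) as [Hpos | <-]; [| apply rpow_0].
      pose proof (rpow_gt0 (a i) 2 Hpos). lra. }
  fold W in HW. set (m := W / c). assert (Hm : 0 < m) by (apply Rdiv_lt_0_compat; lra).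
  (* concavity of [t ^ (q / 2)]: tangent line at the mean [m] of the [a i ^ 2] *)
  apply Rle_trans with (sumR_on r J (fun i =>
     rpow m (q / 2) * (1 - q / 2) + rpow m (q / 2) * (q / 2) / m * rpow (a i) 2)).
  - apply sumR_on_le. intros i _ _.
    replace (rpow (a i) q) with (rpow (rpow (a i) 2) (q / 2))
      by (rewrite rpow_mult by apply Ha; f_equal; field).
    eapply Rle_trans; [apply (rpow_le_tangent (q / 2) m); [lra | lra | apply rpow_ge0] |].
    right. field. lra.
  - rewrite sumR_on_plus, sumR_on_const, sumR_on_scal. fold W c.
    right. unfold m. field. lra.
Qed.

(** * Counting and the top groups *)

Lemma countb_eq0 k P : countb k P = 0%nat -> forall i, (i < k)%nat -> P i = false.
Proof.
  induction k as [| k IH]; simpl; intros H i Hi; [lia |].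
  destruct (Nat.eq_dec i k) as [-> | Hne]; [destruct (P k); [lia | reflexivity] |].
  apply IH; [destruct (P k); lia | lia].
Qed.

Lemma countb_witness k P : (0 < countb k P)%nat -> exists i, (i < k)%nat /\ P i = true.
Proof.
  induction k as [| k IH]; intros H; simpl in H; [lia |].
  destruct (P k) eqn:EP; [exists k; split; [lia | exact EP] |].
  destruct IH as [i [Hi HPi]]; [lia |]. exists i; split; [lia | exact HPi].
Qed.

Lemma countb_ext k P Q : (forall i, (i < k)%nat -> P i = Q i) -> countb k P = countb k Q.
Proof.
  induction k as [| k IH]; intros H; simpl; [reflexivity |].
  rewrite IH by (intros; apply H; lia). rewrite (H k) by lia. reflexivity.
Qed.

Lemma countb_negb k P : (countb k (fun i => negb (P i)) + countb k P)%nat = k.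
Proof. induction k as [| k IH]; simpl; [reflexivity | destruct (P k); simpl; lia]. Qed.

Lemma countb_orb_disjoint k P Q : (forall i, (i < k)%nat -> P i = true -> Q i = false) ->
  countb k (fun i => P i || Q i) = (countb k P + countb k Q)%nat.
Proof.
  induction k as [| k IH]; intros H; simpl; [reflexivity |].
  rewrite IH by (intros; apply H; [lia | assumption]).
  pose proof (H k ltac:(lia)) as Hk.
  destruct (P k), (Q k); simpl; [discriminate (Hk eq_refl) | lia ..].
Qed.

Lemma countb_false k : countb k (fun _ => false) = 0%nat.
Proof. induction k as [| k IH]; simpl; lia. Qed.

Lemma countb_eqb k m : (m < k)%nat -> countb k (fun i => Nat.eqb i m) = 1%nat.
Proof.
  induction k as [| k IH]; intros Hm; simpl; [lia |].
  destruct (Nat.eqb_spec k m) as [-> | Hne].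
  - rewrite (countb_ext m _ (fun _ => false)), countb_false; [reflexivity |].
    intros i Hi. apply Nat.eqb_neq. lia.
  - rewrite IH by lia. lia.
Qed.

Lemma anyb_false k b : anyb k b = false -> forall j, (j < k)%nat -> b j = false.
Proof.
  induction k as [| k IH]; simpl; intros H j Hj; [lia |].
  apply orb_false_iff in H. destruct H as [H Hk].
  destruct (Nat.eq_dec j k) as [-> | Hne]; [exact Hk | apply IH; [exact H | lia]].
Qed.

Lemma argmax_exists k P (v : nat -> R) : (exists i, (i < k)%nat /\ P i = true) ->
  exists m, (m < k)%nat /\ P m = true /\ forall j, (j < k)%nat -> P j = true -> v j <= v m.
Proof.
  induction k as [| k IH]; intros [i [Hi HPi]]; [lia |].
  destruct (Nat.eq_dec (countb k P) 0) as [H0 | Hpos].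
  - assert (HPk : P k = true).
    { destruct (Nat.eq_dec i k) as [<- | Hne]; [exact HPi |].
      rewrite (countb_eq0 k P H0 i) in HPi by lia. discriminate. }
    exists k. repeat split; [lia | exact HPk |]. intros j Hj HPj.
    destruct (Nat.eq_dec j k) as [-> | Hne]; [lra |].
    rewrite (countb_eq0 k P H0 j) in HPj by lia. discriminate.
  - destruct IH as [m [Hm [HPm Hmax]]]; [apply countb_witness; lia |].
    destruct (P k) eqn:HPk; [destruct (Rle_lt_dec (v k) (v m)) as [Hkm | Hmk] |].
    + exists m. repeat split; [lia | exact HPm |]. intros j Hj HPj.
      destruct (Nat.eq_dec j k) as [-> | Hne]; [exact Hkm | apply Hmax; [lia | exact HPj]].
    + exists k. repeat split; [lia | exact HPk |]. intros j Hj HPj.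
      destruct (Nat.eq_dec j k) as [-> | Hne]; [lra |].
      pose proof (Hmax j ltac:(lia) HPj). lra.
    + exists m. repeat split; [lia | exact HPm |]. intros j Hj HPj.
      destruct (Nat.eq_dec j k) as [-> | Hne]; [congruence | apply Hmax; [lia | exact HPj]].
Qed.

Lemma top_set_exists n grp r p x J N : exists T, top_set n grp r p x J N T.
Proof.
  set (v := gnorm n grp p x).
  enough (H : forall N', (N' <= Nat.min N (r - countb r J))%nat -> exists T : nat -> bool,
    (forall i, T i = true -> (i < r)%nat /\ J i = false) /\ countb r T = N' /\
    (forall i j, (i < r)%nat -> (j < r)%nat -> T i = true -> J j = false ->
       T j = false -> v j <= v i)) by (destruct (H _ (le_n _)) as [T HT]; now exists T).
  induction N' as [| N' IH]; intros HN.
  { exists (fun _ => false). split; [discriminate | split; [apply countb_false | discriminate]]. }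
  destruct IH as [T [Tdom [Tcount Ttop]]]; [lia |].
  assert (Hdisj : forall i, (i < r)%nat -> T i = true -> J i = false)
    by (intros i _ Hi; apply Tdom, Hi).
  assert (Hfree : (0 < countb r (fun i => negb (T i || J i)))%nat).
  { pose proof (countb_negb r (fun i => T i || J i)) as E.
    rewrite countb_orb_disjoint in E by exact Hdisj. lia. }
  destruct (argmax_exists r (fun i => negb (T i || J i)) v (countb_witness _ _ Hfree))
    as [m [Hm [HPm Hmax]]].
  apply negb_true_iff, orb_false_iff in HPm. destruct HPm as [HTm HJm].
  exists (fun i => T i || Nat.eqb i m). split; [| split].
  - intros i Hi. apply orb_true_iff in Hi. destruct Hi as [Hi | Hi]; [now apply Tdom |].
    apply Nat.eqb_eq in Hi. subst. split; assumption.
  - rewrite countb_orb_disjoint, countb_eqb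
      by (lia || intros i Hi HTi; apply Nat.eqb_neq; congruence).
    lia.
  - intros i j Hi Hj HTi HJj HTj. apply orb_false_iff in HTj. destruct HTj as [HTj Hjm].
    apply orb_true_iff in HTi. destruct HTi as [HTi | HTi]; [now apply Ttop |].
    apply Nat.eqb_eq in HTi. subst. apply Hmax; [exact Hj |]. now rewrite HTj, HJj.
Qed.

Lemma top_set_full n grp r p x J N T : top_set n grp r p x J N T ->
  (exists i, (i < r)%nat /\ J i = false /\ T i = false) -> countb r T = N.
Proof.
  intros [Tdom [Tcount _]] [i [Hi [HJi HTi]]].
  assert (Hfree : countb r (fun i => negb (T i || J i)) <> 0%nat).
  { intro H0. pose proof (countb_eq0 _ _ H0 i Hi) as H. cbv beta in H. now rewrite HTi, HJi in H. }
  pose proof (countb_negb r (fun i => T i || J i)) as E.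
  rewrite countb_orb_disjoint in E by (intros k _ Hk; apply Tdom, Hk). lia.
Qed.

(** * Head and tail estimates *)

Lemma rpow_le_of_mul_le c lam y q : 0 < q < 2 -> 0 < c -> 0 <= y ->
  c * y <= lam * rpow y (q / 2) -> y <= rpow (lam / c) (2 / (2 - q)).
Proof.
  intros Hq Hc [Hy | <-] H; [| apply rpow_ge0].
  assert (Hyq : 0 < rpow y (q / 2)) by (apply rpow_gt0; exact Hy).
  assert (Hsplit : y = rpow y (q / 2) * rpow y (1 - q / 2)).
  { rewrite <- rpow_plus by lra. replace (q / 2 + (1 - q / 2)) with 1 by ring.
    now rewrite rpow_1 by lra. }
  assert (Hle : rpow y (1 - q / 2) <= lam / c).
  { apply Rmult_le_reg_l with (c * rpow y (q / 2)); [now apply Rmult_lt_0_compat |].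
    replace (c * rpow y (q / 2) * (lam / c)) with (lam * rpow y (q / 2)) by (field; lra).
    rewrite Rmult_assoc, <- Hsplit. exact H. }
  replace y with (rpow (rpow y (1 - q / 2)) (2 / (2 - q))) at 1
    by (rewrite rpow_mult by lra; replace ((1 - q / 2) * (2 / (2 - q))) with 1 by (field; lra);
        now apply rpow_1; lra).
  apply rpow_le_l; [apply Rdiv_nonneg; lra | split; [apply rpow_ge0 | exact Hle]].
Qed.

Lemma head_bound s phi lam q C D W : 0 < q <= 1 -> 0 < phi -> 0 < lam -> 0 < s ->
  0 <= W -> W <= D -> phi ^ 2 * D <= lam * C -> C <= s * rpow (W / s) (q / 2) ->
  D <= s * rpow (lam / phi ^ 2) (2 / (2 - q)).
Proof.
  intros Hq Hphi Hlam Hs HW HWD HD HC.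
  (* with [y = D / s]: [phi ^ 2 y <= lam (W / s) ^ (q / 2) <= lam y ^ (q / 2)] *)
  assert (Hy : D / s <= rpow (lam / phi ^ 2) (2 / (2 - q))).
  { apply rpow_le_of_mul_le; [lra | apply pow_lt; lra | apply Rdiv_nonneg; lra |].
    assert (HWs : rpow (W / s) (q / 2) <= rpow (D / s) (q / 2)).
    { apply rpow_le_l; [lra |]. split; [apply Rdiv_nonneg; lra |].
      apply Rmult_le_compat_r; [left; apply Rinv_0_lt_compat |]; lra. }
    apply Rmult_le_reg_l with s; [exact Hs |].
    replace (s * (phi ^ 2 * (D / s))) with (phi ^ 2 * D) by (field; lra).
    apply (Rmult_le_compat_l (s * lam)) in HWs; [| nra]. nra. }
  apply (Rmult_le_compat_l s) in Hy; [| lra].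
  now replace (s * (D / s)) with D in Hy by (field; lra).
Qed.

Lemma sumR_on_sq_le r P (a : nat -> R) q b : 0 < q <= 1 -> (forall i, 0 <= a i) ->
  (forall i, (i < r)%nat -> P i = true -> rpow (a i) q <= b) ->
  sumR_on r P (fun i => rpow (a i) 2) <= rpow b ((2 - q) / q) * sumR_on r P (fun i => rpow (a i) q).
Proof.
  intros Hq Ha Hb. rewrite <- sumR_on_scal. apply sumR_on_le. intros i Hi HPi.
  replace (rpow (a i) 2) with (rpow (rpow (a i) q) ((2 - q) / q) * rpow (a i) q)
    by (rewrite rpow_mult, <- rpow_plus by apply Ha; f_equal; field; lra).
  apply Rmult_le_compat_r; [apply rpow_ge0 |].
  apply rpow_le_l; [apply Rdiv_nonneg; lra | split; [apply rpow_ge0 | now apply Hb]].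
Qed.

Lemma tail_sq_le_head r s J T (a : nat -> R) q : 0 < q <= 1 -> (forall i, 0 <= a i) ->
  countb r J = s -> (0 < s)%nat ->
  (forall i, (i < r)%nat -> J i = false -> T i = false ->
     INR s * rpow (a i) q <= sumR_on r (fun i => negb (J i)) (fun i => rpow (a i) q)) ->
  sumR_on r (fun i => negb (J i)) (fun i => rpow (a i) q) <= sumR_on r J (fun i => rpow (a i) q) ->
  sumR_on r (fun i => negb (J i || T i)) (fun i => rpow (a i) 2)
    <= sumR_on r J (fun i => rpow (a i) 2).
Proof.
  intros Hq Ha HJ Hs Hmass Hcone.
  set (B := sumR_on r (fun i => negb (J i)) (fun i => rpow (a i) q)) in *.
  assert (HB0 : 0 <= B) by (apply sumR_on_nonneg; intros; apply rpow_ge0).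
  set (W := sumR_on r J (fun i => rpow (a i) 2)).
  assert (HsR : 0 < INR s) by (apply lt_0_INR; exact Hs).
  set (z := W / INR s).
  assert (Hz : 0 <= z) by (apply Rdiv_nonneg; [apply sumR_on_nonneg; intros; apply rpow_ge0 | lra]).
  assert (HB : B <= INR s * rpow z (q / 2)).
  { eapply Rle_trans; [exact Hcone |]. unfold z, W. rewrite <- HJ.
    apply power_mean; [exact Hq | exact Ha | lia]. }
  assert (HBs : B / INR s <= rpow z (q / 2)).
  { apply Rmult_le_reg_l with (INR s); [lra |].
    replace (INR s * (B / INR s)) with B by (field; lra). exact HB. }
  apply Rle_trans with (rpow (B / INR s) ((2 - q) / q) * B).
  - eapply Rle_trans; [apply sumR_on_sq_le; [exact Hq | exact Ha |] |].
    + intros i Hi Hout. apply negb_true_iff, orb_false_iff in Hout.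
      apply Rmult_le_reg_l with (INR s); [lra |].
      replace (INR s * (B / INR s)) with B by (field; lra). now apply Hmass.
    + apply Rmult_le_compat_l; [apply rpow_ge0 |].
      apply sumR_on_subset; [intros; apply rpow_ge0 |].
      intros i _ Hi. apply negb_true_iff, orb_false_iff in Hi. now apply negb_true_iff.
  - (* [(B / s) ^ ((2 - q) / q) * B <= z ^ ((2 - q) / 2) * (s z ^ (q / 2)) = s z = W] *)
    apply Rle_trans with (rpow z ((2 - q) / 2) * (INR s * rpow z (q / 2))).
    + apply Rmult_le_compat; [apply rpow_ge0 | exact HB0 | | exact HB].
      replace ((2 - q) / 2) with (q / 2 * ((2 - q) / q)) by (field; lra).
      rewrite <- rpow_mult by exact Hz.
      apply rpow_le_l; [apply Rdiv_nonneg; lra |].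
      split; [apply Rdiv_nonneg; lra | exact HBs].
    + replace (rpow z ((2 - q) / 2) * (INR s * rpow z (q / 2)))
        with (INR s * rpow z ((2 - q) / 2 + q / 2))
        by (rewrite rpow_plus by exact Hz; ring).
      replace ((2 - q) / 2 + q / 2) with 1 by field. rewrite rpow_1 by exact Hz.
      right. unfold z. field. lra.
Qed.

(** * Group norms of the error vector *)

Section GroupNorms.

Variables (n r : nat) (grp : nat -> nat) (p q : R).
Hypothesis Hgrp : forall j, (j < n)%nat -> (grp j < r)%nat.

Lemma gnorm_ge0 x i : 0 <= gnorm n grp p x i.
Proof. apply rpow_ge0. Qed.

Lemma gnorm_full_rpow x : 0 < q ->
  rpow (gnorm_full n grp r p q x) q = sumR r (fun i => rpow (gnorm n grp p x i) q).
Proof.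
  intro Hq. apply rpow_rpow_inv; [| lra].
  apply sumR_nonneg. intros; apply rpow_ge0.
Qed.

Lemma grp_nz_false x i : grp_nz n grp x i = false ->
  forall j, (j < n)%nat -> Nat.eqb (grp j) i = true -> x j = 0.
Proof.
  intros H j Hj Hg. pose proof (anyb_false n _ H j Hj) as Hb. cbv beta in Hb.
  rewrite Hg in Hb. unfold Rnzb in Hb. destruct (Req_EM_T (x j) 0); [assumption | discriminate].
Qed.

Lemma gnorm_sub_off_support xs xbar i : grp_nz n grp xbar i = false ->
  gnorm n grp p (fun j => xs j - xbar j) i = gnorm n grp p xs i.
Proof.
  intro H. unfold gnorm. f_equal. apply sumR_ext. intros j Hj.
  destruct (Nat.eqb (grp j) i) eqn:E; [| reflexivity].
  rewrite (grp_nz_false xbar i H j Hj E). f_equal. f_equal. ring.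
Qed.

Lemma gnorm_off_support x i : grp_nz n grp x i = false -> gnorm n grp p x i = 0.
Proof.
  intro H. unfold gnorm. rewrite (sumR_ext n _ (fun _ => 0)), sumR_0 by
    (intros j Hj; destruct (Nat.eqb (grp j) i) eqn:E;
     [rewrite (grp_nz_false x i H j Hj E), Rabs_R0; apply rpow_0 | reflexivity]).
  apply rpow_0.
Qed.

Lemma gnorm_triangle x y i : 1 <= p ->
  gnorm n grp p y i <= gnorm n grp p x i + gnorm n grp p (fun j => x j - y j) i.
Proof.
  intro Hp. apply (minkowski n (fun j => Nat.eqb (grp j) i) p x (fun j => x j - y j) y Hp).
  intros j _ _. pose proof (Rabs_triang (x j) (- (x j - y j))) as H.
  rewrite Rabs_Ropp in H. now replace (x j + - (x j - y j)) with (y j) in H by ring.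
Qed.

Lemma sum_sq_le_gnorm_sq x : 1 <= p <= 2 ->
  sumR n (fun j => x j ^ 2) <= sumR r (fun i => rpow (gnorm n grp p x i) 2).
Proof.
  intro Hp. rewrite (sumR_regroup n r grp _ Hgrp). apply sumR_le. intros i _.
  exact (sum_sq_le_psum n (fun j => Nat.eqb (grp j) i) p x Hp).
Qed.

Lemma level_set_cone xs xbar lam E : 0 < q <= 1 -> 1 <= p -> 0 < lam ->
  E + lam * rpow (gnorm_full n grp r p q xs) q <= lam * rpow (gnorm_full n grp r p q xbar) q ->
  let J := grp_nz n grp xbar in
  let u i := rpow (gnorm n grp p (fun j => xs j - xbar j) i) q in
  E + lam * sumR_on r (fun i => negb (J i)) u <= lam * sumR_on r J u.
Proof.
  intros Hq Hp Hlam Hlev J u. rewrite !gnorm_full_rpow in Hlev by lra.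
  rewrite (sumR_on_split r J) in Hlev.
  rewrite (sumR_on_split r J (fun i => rpow (gnorm n grp p xbar i) q)) in Hlev.
  assert (Hoff : sumR_on r (fun i => negb (J i)) (fun i => rpow (gnorm n grp p xs i) q)
                 = sumR_on r (fun i => negb (J i)) u).
  { apply sumR_ext. intros i _. unfold u. destruct (J i) eqn:EJ; [reflexivity |].
    simpl. now rewrite gnorm_sub_off_support. }
  assert (Hbar0 : sumR_on r (fun i => negb (J i)) (fun i => rpow (gnorm n grp p xbar i) q) = 0).
  { rewrite <- (sumR_0 r). apply sumR_ext. intros i _. destruct (J i) eqn:EJ; [reflexivity |].
    simpl. rewrite gnorm_off_support by exact EJ. apply rpow_0. }
  assert (Hon : sumR_on r J (fun i => rpow (gnorm n grp p xbar i) q)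
                <= sumR_on r J (fun i => rpow (gnorm n grp p xs i) q) + sumR_on r J u).
  { rewrite <- sumR_on_plus. apply sumR_on_le. intros i _ _. unfold u.
    eapply Rle_trans; [| apply rpow_add_le; [exact Hq | apply gnorm_ge0 | apply gnorm_ge0]].
    apply rpow_le_l; [lra | split; [apply gnorm_ge0 | now apply gnorm_triangle]]. }
  rewrite Hoff, Hbar0 in Hlev.
  apply (Rmult_le_compat_l lam) in Hon; lra.
Qed.

Lemma grec_lower_bound m A s phi x J T :
  is_glb (phi_set m n grp r A p q s s) phi -> 0 <= phi -> 0 < q ->
  (exists j, (j < n)%nat /\ x j <> 0) -> (countb r J <= s)%nat ->
  sumR_on r (fun i => negb (J i)) (fun i => rpow (gnorm n grp p x i) q)
    <= sumR_on r J (fun i => rpow (gnorm n grp p x i) q) ->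
  top_set n grp r p x J s T ->
  phi ^ 2 * sumR_on r (fun i => J i || T i) (fun i => rpow (gnorm n grp p x i) 2)
    <= sumR m (fun k => matvec n A x k ^ 2).
Proof.
  intros [Hlb _] Hphi Hq Hx HJ Hcone HT.
  set (D := sumR_on r (fun i => J i || T i) (fun i => rpow (gnorm n grp p x i) 2)).
  set (E := sumR m (fun k => matvec n A x k ^ 2)).
  assert (HD : 0 <= D) by (apply sumR_on_nonneg; intros; apply rpow_ge0).
  assert (HE : 0 <= E) by (apply sumR_nonneg; intros; apply pow2_ge_0).
  assert (Hratio : phi <= sqrt E / sqrt D).
  { rewrite <- (rpow_sqrt D HD). apply Hlb. exists x, J, T.
    split; [exact Hx | split; [exact HJ | split; [| split; [exact HT | reflexivity]]]].
    apply rpow_le_l; [left; now apply Rinv_0_lt_compat |].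
    split; [apply sumR_on_nonneg; intros; apply rpow_ge0 | exact Hcone]. }
  destruct HD as [HD | <-]; [| rewrite Rmult_0_r; exact HE].
  assert (HsD : 0 < sqrt D) by now apply sqrt_lt_R0.
  assert (Hmul : phi * sqrt D <= sqrt E).
  { apply Rmult_le_compat_r with (r := sqrt D) in Hratio; [| lra].
    now replace (sqrt E / sqrt D * sqrt D) with (sqrt E) in Hratio by (field; lra). }
  assert (Hsq := pow_incr (phi * sqrt D) (sqrt E) 2
    (conj (Rmult_le_pos _ _ Hphi (Rlt_le _ _ HsD)) Hmul)).
  rewrite Rpow_mult_distr, !pow2_sqrt in Hsq by lra. exact Hsq.
Qed.

Lemma top_set_mass x J s T : 0 < q -> top_set n grp r p x J s T ->
  forall i, (i < r)%nat -> J i = false -> T i = false ->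
  INR s * rpow (gnorm n grp p x i) q
    <= sumR_on r (fun i => negb (J i)) (fun i => rpow (gnorm n grp p x i) q).
Proof.
  intros Hq HT i Hi HJi HTi. pose proof HT as [Tdom [_ Ttop]].
  rewrite <- (top_set_full n grp r p x J s T HT) by (exists i; auto).
  rewrite <- sumR_on_const. eapply Rle_trans.
  - apply sumR_on_le. intros k Hk HTk.
    apply rpow_le_l; [lra | split; [apply gnorm_ge0 | exact (Ttop k i Hk Hi HTk HJi HTi)]].
  - apply sumR_on_subset; [intros; apply rpow_ge0 |].
    intros k _ HTk. apply negb_true_iff. exact (proj2 (Tdom k HTk)).
Qed.

Lemma level_set_error_bound m A s lam phi xs xbar :
  0 < q <= 1 -> 1 <= p <= 2 -> (1 <= s)%nat -> countb r (grp_nz n grp xbar) = s ->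
  is_glb (phi_set m n grp r A p q s s) phi -> 0 < phi -> 0 < lam ->
  l2 m (fun k => matvec n A xs k - matvec n A xbar k) ^ 2 + lam * rpow (gnorm_full n grp r p q xs) q
    <= lam * rpow (gnorm_full n grp r p q xbar) q ->
  sumR n (fun j => (xs j - xbar j) ^ 2) <= 2 * (INR s * rpow (lam / phi ^ 2) (2 / (2 - q))).
Proof.
  intros Hq Hp Hs Hsupp Hglb Hphi Hlam Hlev.
  set (d := fun j => xs j - xbar j).
  set (J := grp_nz n grp xbar) in *.
  set (a := gnorm n grp p d).
  assert (Ha : forall i, 0 <= a i) by (intros; apply gnorm_ge0).
  set (E := sumR m (fun k => matvec n A d k ^ 2)).
  assert (HE : 0 <= E) by (apply sumR_nonneg; intros; apply pow2_ge_0).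
  replace (l2 m (fun k => matvec n A xs k - matvec n A xbar k) ^ 2) with E in Hlev.
  2:{ rewrite l2_sq. apply sumR_ext. intros k _. unfold matvec. rewrite <- sumR_minus.
      f_equal. apply sumR_ext. intros j _. unfold d. ring. }
  pose proof (level_set_cone xs xbar lam E Hq (proj1 Hp) Hlam Hlev) as Hcone.
  cbv zeta in Hcone. fold J d a in Hcone.
  set (B := sumR_on r (fun i => negb (J i)) (fun i => rpow (a i) q)) in Hcone.
  set (C := sumR_on r J (fun i => rpow (a i) q)) in Hcone.
  assert (HB : 0 <= lam * B)
    by (apply Rmult_le_pos; [lra | apply sumR_on_nonneg; intros; apply rpow_ge0]).
  assert (HBC : B <= C) by (apply Rmult_le_reg_l with lam; lra).
  assert (Hrhs : 0 <= INR s * rpow (lam / phi ^ 2) (2 / (2 - q)))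
    by (apply Rmult_le_pos; [apply pos_INR | apply rpow_ge0]).
  destruct (sumR_zero_or_witness n d) as [Hd0 | Hd].
  { rewrite (sumR_ext n _ (fun _ => 0)), sumR_0; [lra |].
    intros j Hj. change (xs j - xbar j) with (d j). rewrite Hd0 by exact Hj. ring. }
  destruct (top_set_exists n grp r p d J s) as [T HT].
  set (D := sumR_on r (fun i => J i || T i) (fun i => rpow (a i) 2)).
  set (W := sumR_on r J (fun i => rpow (a i) 2)).
  assert (HWD : W <= D)
    by (apply sumR_on_subset; [intros; apply rpow_ge0 | intros i _ Hi; now rewrite Hi]).
  assert (Hhead : D <= INR s * rpow (lam / phi ^ 2) (2 / (2 - q))).
  { apply (head_bound (INR s) phi lam q C D W Hq Hphi Hlam);
      [apply lt_0_INR; lia | | exact HWD | |].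
    - apply sumR_on_nonneg. intros; apply rpow_ge0.
    - enough (phi ^ 2 * D <= E) by lra.
      apply (grec_lower_bound m A s phi d J T Hglb); (lra || lia || assumption).
    - rewrite <- Hsupp. apply power_mean; [exact Hq | exact Ha | lia]. }
  assert (Htail : sumR_on r (fun i => negb (J i || T i)) (fun i => rpow (a i) 2) <= W).
  { apply (tail_sq_le_head r s J T a q Hq Ha Hsupp ltac:(lia)); [| exact HBC].
    exact (top_set_mass d J s T (proj1 Hq) HT). }
  assert (Hall : sumR r (fun i => rpow (a i) 2) <= 2 * D)
    by (rewrite (sumR_on_split r (fun i => J i || T i)); fold D; lra).
  apply Rle_trans with (2 * D); [| lra].
  eapply Rle_trans; [exact (sum_sq_le_gnorm_sq d Hp) | exact Hall].
Qed.

End GroupNorms.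

Definition grec_exponent (q : R) (K : nat) : R :=
  (q - 2) / q + (1 - / 2 ^ K) * (4 / (q * (2 - q))).

Lemma grec_exponent_eq q K : 0 < q < 2 -> (1 <= K)%nat ->
  grec_exponent q K = 1 + 2 * (q - / 2 ^ (K - 1)) / (q * (2 - q)).
Proof.
  intros Hq HK. unfold grec_exponent.
  replace (2 ^ K) with (2 * 2 ^ (K - 1)) by (destruct K; [lia | simpl; now rewrite Nat.sub_0_r]).
  assert (0 < 2 ^ (K - 1)) by (apply pow_lt; lra).
  field. repeat split; lra.
Qed.

Lemma grec_exponent_eq_1 q K : 0 < q < 2 -> (1 <= K)%nat -> 2 ^ (K - 1) * q = 1 ->
  grec_exponent q K = 1.
Proof.
  intros Hq HK H. rewrite grec_exponent_eq by assumption.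
  replace (/ 2 ^ (K - 1)) with q by (field_simplify_eq; [lra | apply pow_nonzero; lra]).
  unfold Rdiv. ring.
Qed.

Lemma grec_exponent_ge_1 q K : 0 < q < 2 -> (1 <= K)%nat -> 1 <= 2 ^ (K - 1) * q ->
  1 <= grec_exponent q K.
Proof.
  intros Hq HK H. rewrite grec_exponent_eq by assumption.
  assert (Hu : 0 < 2 ^ (K - 1)) by (apply pow_lt; lra).
  assert (/ 2 ^ (K - 1) <= q).
  { apply Rmult_le_reg_l with (2 ^ (K - 1)); [exact Hu |]. rewrite Rinv_r; lra. }
  enough (0 <= 2 * (q - / 2 ^ (K - 1)) / (q * (2 - q))) by lra.
  apply Rdiv_nonneg; nra.
Qed.

Lemma grec_exponent_lt q K : 0 < q < 2 -> (2 <= K)%nat -> 2 ^ (K - 2) * q < 1 ->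
  grec_exponent q K < (3 - q) / (2 - q).
Proof.
  intros Hq HK H. rewrite grec_exponent_eq by (lra || lia).
  replace (2 ^ (K - 1)) with (2 * 2 ^ (K - 2))
    by (destruct K as [| [| K]]; [lia | lia | simpl; now rewrite Nat.sub_0_r]).
  assert (Ht : 0 < 2 ^ (K - 2)) by (apply pow_lt; lra).
  assert (q < / 2 ^ (K - 2)).
  { apply Rmult_lt_reg_l with (2 ^ (K - 2)); [exact Ht |]. rewrite Rinv_r; lra. }
  replace ((3 - q) / (2 - q)) with (1 + q / (q * (2 - q))) by (field; lra).
  apply Rplus_lt_compat_l. apply Rmult_lt_compat_r; [apply Rinv_0_lt_compat; nra |].
  rewrite Rinv_mult. lra.
Qed.

Lemma rpow_div_sq lam phi a : 0 <= lam -> 0 < phi ->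
  rpow (lam / phi ^ 2) a = rpow lam a / rpow phi (2 * a).
Proof.
  intros Hlam Hphi. rewrite rpow_div by (lra || apply pow_lt; lra).
  now rewrite <- rpow_2, rpow_mult by lra.
Qed.

Theorem theorem2p1 (m n r : nat) (grp : nat -> nat) (p q : R)
  (A : nat -> nat -> R) (xbar : nat -> R) (s K : nat) (lam phi : R)
  (Hgrp1 : forall j, (j < n)%nat -> (grp j < r)%nat)
  (Hgrp2 : forall i, (i < r)%nat -> exists j, (j < n)%nat /\ grp j = i)
  (Hq : 0 < q <= 1) (Hp : 1 <= p <= 2)
  (Hs : (1 <= s)%nat) (Hsupp : countb r (grp_nz n grp xbar) = s)
  (Hphi : is_glb (phi_set m n grp r A p q s s) phi) (Hgrec : 0 < phi)
  (HK1 : (1 <= K)%nat) (HK2 : 1 <= 2 ^ (K - 1) * q)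
  (HK3 : forall k : nat, (1 <= k)%nat -> (k < K)%nat -> 2 ^ (k - 1) * q < 1)
  (Hlam : 0 < lam) :
  let b := matvec n A xbar in
  let e := (q - 2) / q + (1 - / 2 ^ K) * (4 / (q * (2 - q))) in
  (2 ^ (K - 1) * q = 1 -> e = 1) /\
  (2 ^ (K - 1) * q > 1 -> e < (3 - q) / (2 - q)) /\
  forall xs : nat -> R,
    (l2 m (fun k => matvec n A xs k - b k)) ^ 2
      + lam * rpow (gnorm_full n grp r p q xs) q
      <= lam * rpow (gnorm_full n grp r p q xbar) q ->
    (l2 n (fun j => xs j - xbar j)) ^ 2
      <= 2 * rpow lam (2 / (2 - q)) * rpow (INR s) e / rpow phi (4 / (2 - q)) /\
    (2 ^ (K - 1) * q = 1 ->
      (l2 n (fun j => xs j - xbar j)) ^ 2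
        <= 2 / rpow phi (4 / (2 - q)) * (rpow lam (2 / (2 - q)) * INR s)) /\
    (2 ^ (K - 1) * q > 1 ->
      (l2 n (fun j => xs j - xbar j)) ^ 2
        <= 2 / rpow phi (4 / (2 - q))
           * (rpow lam (2 / (2 - q)) * rpow (INR s) ((3 - q) / (2 - q)))).
Proof.
  intros b e. change e with (grec_exponent q K).
  assert (Hq2 : 0 < q < 2) by lra.
  assert (Hlt : 2 ^ (K - 1) * q > 1 -> grec_exponent q K < (3 - q) / (2 - q)).
  { intro H.
    assert (HK : (2 <= K)%nat) by (destruct (Nat.eq_dec K 1) as [-> |]; [simpl in H; lra | lia]).
    apply grec_exponent_lt; [exact Hq2 | exact HK |].
    replace (K - 2)%nat with (K - 1 - 1)%nat by lia. apply HK3; lia. }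
  split; [now apply grec_exponent_eq_1 | split; [exact Hlt |]].
  intros xs Hlev.
  pose proof (level_set_error_bound n r grp p q Hgrp1 m A s lam phi xs xbar
    Hq Hp Hs Hsupp Hphi Hgrec Hlam Hlev) as Hbound.
  rewrite rpow_div_sq, <- l2_sq in Hbound by lra.
  replace (2 * (2 / (2 - q))) with (4 / (2 - q)) in Hbound by (field; lra).
  set (L := l2 n (fun j => xs j - xbar j) ^ 2) in *.
  set (Lam := rpow lam (2 / (2 - q))) in *. set (Phi := rpow phi (4 / (2 - q))) in *.
  assert (HPhi : 0 < Phi) by (apply rpow_gt0; exact Hgrec).
  assert (HLam : 0 <= Lam) by apply rpow_ge0.
  assert (HsR : 1 <= INR s) by (apply (le_INR 1); exact Hs).
  assert (Hscale : forall t, INR s <= t -> L <= 2 / Phi * (Lam * t)).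
  { intros t Ht. eapply Rle_trans; [exact Hbound |].
    replace (2 * (INR s * (Lam / Phi))) with (2 / Phi * (Lam * INR s)) by (field; lra).
    apply Rmult_le_compat_l; [apply Rdiv_nonneg; lra | now apply Rmult_le_compat_l]. }
  assert (Hge1 := grec_exponent_ge_1 q K Hq2 HK1 HK2).
  split; [| split]; [| intros _; now apply Hscale | intro H].
  - replace (2 * Lam * rpow (INR s) (grec_exponent q K) / Phi)
      with (2 / Phi * (Lam * rpow (INR s) (grec_exponent q K))) by (field; lra).
    now apply Hscale, rpow_ge_self.
  - apply Hscale, rpow_ge_self; [exact HsR |]. pose proof (Hlt H). lra.
Qed.
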